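(* Let $(M,g)$ be a Riemannian manifold with positive curvature operator and let $f$ be a smooth function on $M$. Then pointwise on $M$, $$R_{ijkl}R_{ik}f_jf_l\ge 0.$$
   Context: All tensors are written in components with respect to local orthonormal frames, with repeated indices summed. $R_{ijkl}$ is the Riemann curvature tensor, normalized so that $R_{ijij}$ is the sectional curvature of the plane spanned by $e_i,e_j$, and the Ricci tensor is $R_{jk}=R_{ijik}$; $f_i=\nabla_if$. The curvature operator is the symmetric operator on $2$-forms whose quadratic form is $\omega\mapsto R_{ikjl}\omega_{ik}\omega_{jl}$; ''positive'' means this form is positive definite. *)

From HB Require Import structures.
From mathcomp Require Import all_boot all_order all_algebra.
From mathcomp Require Import reals.
Set Implicit Arguments. Unset Strict Implicit. Unset Printing Implicit Defensive.
Import Order.TTheory GRing.Theory Num.Theory.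
Local Open Scope ring_scope.

(* Pointwise (algebraic) setting: components of a tensor in an orthonormal
   frame e_0,...,e_{n-1} of the tangent space T_pM. *)
Definition tensor4 (R : Type) (n : nat) := 'I_n -> 'I_n -> 'I_n -> 'I_n -> R.

Definition is_curvature_tensor (R : realType) (n : nat) (Rm : tensor4 R n) :=
  [/\ (forall i j k l, Rm i j k l = - Rm j i k l),
      (forall i j k l, Rm i j k l = - Rm i j l k),
      (forall i j k l, Rm i j k l = Rm k l i j) &
      (forall i j k l, Rm i j k l + Rm j k i l + Rm k i j l = 0)].

Definition ricci (R : realType) (n : nat) (Rm : tensor4 R n) (j k : 'I_n) : R :=
  \sum_(i < n) Rm i j i k.

Definition two_form (R : realType) (n : nat) (w : 'M[R]_n) := w^T = - w.

Definition curv_op_form (R : realType) (n : nat) (Rm : tensor4 R n) (w : 'M[R]_n) : R :=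
  \sum_(i < n) \sum_(k < n) \sum_(j < n) \sum_(l < n) Rm i k j l * w i k * w j l.

Definition pos_curv_op (R : realType) (n : nat) (Rm : tensor4 R n) :=
  forall w : 'M[R]_n, two_form w -> w != 0 -> 0 < curv_op_form Rm w.

From HB Require Import structures.
From mathcomp Require Import all_boot all_order all_algebra.
From mathcomp Require Import reals.
From mathcomp Require Import ring lra.
Import Order.TTheory GRing.Theory Num.Theory.
Local Open Scope ring_scope.

(* The Jacobi operator A_ik = R_ijkl f_j f_l is positive semidefinite: A(x, x)
   = R(x, f, x, f) is a quarter of the curvature-operator form at the 2-form
   x /\ f.  The Ricci tensor is the sum of the Jacobi operators of the frame
   vectors, so it is positive semidefinite as well.  The quantity to bound is
   the Frobenius product tr(A Ric) of these two matrices, and the Frobenius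
   product of positive semidefinite matrices is nonnegative: peeling off Ric
   the rank-one terms v v^T / Ric_pp, with v = Ric e_p, by successive Schur
   complements writes it as a sum of terms A(v, v) / Ric_pp >= 0. *)

Set Implicit Arguments. Unset Strict Implicit. Unset Printing Implicit Defensive.

Section PsdForms.
Variables (R : realFieldType) (n : nat).
Implicit Types (A B : 'I_n -> 'I_n -> R) (x : 'I_n -> R).

Definition basis (p : 'I_n) : 'I_n -> R := fun j => (j == p)%:R.
Definition matvec B x i : R := \sum_(k < n) B i k * x k.
Definition quad_form B x : R := \sum_(i < n) x i * matvec B x i.
Definition psd B := forall x, 0 <= quad_form B x.
Definition sym_form B := forall i k, B i k = B k i.
Definition frobenius A B : R := \sum_(i < n) \sum_(k < n) A i k * B i k.

Lemma sum_mul_basis (G : 'I_n -> R) p : \sum_(j < n) G j * basis p j = G p.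
Proof.
rewrite (bigD1 p) //= /basis eqxx mulr1 big1 ?addr0 // => j /negbTE ->.
by rewrite mulr0.
Qed.

Lemma matvec_add_basis B x c p i :
  matvec B (fun j => x j + c * basis p j) i = matvec B x i + c * B i p.
Proof.
rewrite /matvec -(sum_mul_basis (B i)) big_distrr -big_split /=.
by apply: eq_bigr => k _; ring.
Qed.

Lemma quad_form_add_basis B x c p : sym_form B ->
  quad_form B (fun j => x j + c * basis p j) =
  quad_form B x + 2 * c * matvec B x p + c ^+ 2 * B p p.
Proof.
move=> Bsym; rewrite /quad_form.
under eq_bigr => i _ do rewrite matvec_add_basis.
have col_p : \sum_(i < n) x i * B i p = matvec B x p.
  by apply: eq_bigr => i _; rewrite Bsym mulrC.
have -> : \sum_(i < n) (x i + c * basis p i) * (matvec B x i + c * B i p) =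
  \sum_(i < n) x i * matvec B x i + c * \sum_(i < n) x i * B i p
  + c * \sum_(i < n) (matvec B x i + c * B i p) * basis p i.
  rewrite !big_distrr -!big_split /=; apply: eq_bigr => i _; ring.
by rewrite col_p sum_mul_basis; ring.
Qed.

Lemma quad_form_basis B p : quad_form B (basis p) = B p p.
Proof.
rewrite /quad_form; under eq_bigr => i _ do rewrite /matvec sum_mul_basis mulrC.
exact: sum_mul_basis.
Qed.

Lemma psd_diag_ge0 B p : psd B -> 0 <= B p p.
Proof. by move=> Bpsd; rewrite -quad_form_basis. Qed.

Lemma psd_sum (I : finType) (F : I -> 'I_n -> 'I_n -> R) :
  (forall m, psd (F m)) -> psd (fun i k => \sum_m F m i k).
Proof.
move=> Fpsd x; have -> : quad_form (fun i k => \sum_m F m i k) x = \sum_m quad_form (F m) x.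
  rewrite /quad_form exchange_big; apply: eq_bigr => i _.
  rewrite -big_distrr /matvec exchange_big; congr (_ * _).
  by apply: eq_bigr => k _; rewrite big_distrl.
by apply: sumr_ge0 => m _; apply: Fpsd.
Qed.

(* If [B i k] were nonzero, [e_k + c e_i] would have [B]-norm [B k k + 2 c B i k],
   which is negative for a suitable [c]. *)
Lemma psd_diag0_row0 B i k : sym_form B -> psd B -> B i i = 0 -> B i k = 0.
Proof.
move=> Bsym Bpsd Bii; apply/eqP/negPn/negP => Bik_neq0.
pose c := - (B k k + 1) / (2 * B i k).
have := Bpsd (fun j => basis k j + c * basis i j).
rewrite quad_form_add_basis // quad_form_basis Bii mulr0 addr0.
rewrite /matvec sum_mul_basis.
have -> : 2 * c * B i k = - (B k k + 1) by rewrite /c; field.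
lra.
Qed.

Definition schur B p i k : R := B i k - B i p * B k p / B p p.

Lemma sym_schur B p : sym_form B -> sym_form (schur B p).
Proof. by move=> Bsym i k; rewrite /schur Bsym [B i p * _]mulrC. Qed.

Lemma matvec_schur B p x i : sym_form B ->
  matvec (schur B p) x i = matvec B x i - B i p * matvec B x p / B p p.
Proof.
move=> Bsym; rewrite /matvec mulrAC big_distrr -sumrB /=.
by apply: eq_bigr => k _; rewrite /schur (Bsym p k); ring.
Qed.

(* The Schur complement of [B] at [p] is [B] restricted to the [B]-orthogonal
   complement of [e_p]. *)
Lemma quad_form_schur B p x : sym_form B -> B p p != 0 ->
  quad_form (schur B p) x =
  quad_form B (fun j => x j + (- matvec B x p / B p p) * basis p j).
Proof.
move=> Bsym Bpp_neq0; rewrite quad_form_add_basis //.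
have col_p : \sum_(i < n) x i * B i p = matvec B x p.
  by apply: eq_bigr => i _; rewrite Bsym mulrC.
rewrite /quad_form; under eq_bigr => i _ do rewrite matvec_schur // mulrBr.
rewrite sumrB -!/(quad_form B x).
have -> : \sum_(i < n) x i * (B i p * matvec B x p / B p p) =
          matvec B x p * matvec B x p / B p p.
  by rewrite -col_p !big_distrl; apply: eq_bigr => i _ /=; rewrite !mulrA.
by field.
Qed.

Lemma psd_schur B p : sym_form B -> psd B -> B p p != 0 -> psd (schur B p).
Proof. by move=> Bsym Bpsd Bpp_neq0 x; rewrite quad_form_schur. Qed.

Definition diag_support B : {set 'I_n} := [set i | B i i != 0].

Lemma diag_support_schur B p : sym_form B -> psd B -> B p p != 0 ->
  diag_support (schur B p) \subset diag_support B :\ p.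
Proof.
move=> Bsym Bpsd Bpp_neq0; apply/subsetP => i; rewrite !inE /schur.
have [->|_] := eqVneq i p; first by rewrite mulrK ?unitfE // subrr eqxx.
apply: contraNN => /eqP Bii.
by rewrite Bii (psd_diag0_row0 p Bsym Bpsd Bii) !mul0r subr0.
Qed.

Lemma frobenius_schur A B p : B p p != 0 ->
  frobenius A B = frobenius A (schur B p) + quad_form A (fun i => B i p) / B p p.
Proof.
move=> Bpp_neq0; rewrite /frobenius /quad_form /matvec big_distrl -big_split /=.
apply: eq_bigr => i _; rewrite big_distrr big_distrl -big_split /=.
by apply: eq_bigr => k _; rewrite /schur; field.
Qed.

Lemma frobenius_diag_support0 A B : sym_form B -> psd B ->
  diag_support B = set0 -> frobenius A B = 0.
Proof.
move=> Bsym Bpsd /setP supp0; rewrite /frobenius big1 // => i _.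
have /eqP Bii : B i i == 0 by have := supp0 i; rewrite !inE => /negbFE.
by rewrite big1 // => k _; rewrite (psd_diag0_row0 k Bsym Bpsd Bii) mulr0.
Qed.

(* Each step peels the positive rank-one term [B e_p (B e_p)^T / B p p] off [B]. *)
Lemma frobenius_psd_ge0 A B : psd A -> sym_form B -> psd B -> 0 <= frobenius A B.
Proof.
move=> Apsd; move: {2}#|diag_support B| (leqnn #|diag_support B|) => N.
elim: N B => [|N IH] B suppN Bsym Bpsd.
  by rewrite frobenius_diag_support0 //; apply/eqP; rewrite -cards_eq0 -leqn0.
have [supp0|[p]] := set_0Vmem (diag_support B).
  by rewrite frobenius_diag_support0.
rewrite inE => Bpp_neq0; have Bpp_gt0 : 0 < B p p by rewrite lt0r Bpp_neq0 psd_diag_ge0.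
rewrite (frobenius_schur A Bpp_neq0).
apply: addr_ge0; last exact: divr_ge0 (Apsd _) (ltW Bpp_gt0).
apply: IH; [|exact: sym_schur|exact: psd_schur].
rewrite -ltnS; apply: leq_trans suppN.
rewrite (leq_ltn_trans (subset_leq_card (diag_support_schur Bsym Bpsd Bpp_neq0))) //.
by rewrite [X in (_ < X)%N](cardsD1 p) inE Bpp_neq0.
Qed.

End PsdForms.

Arguments basis {R n}.

Lemma sum_antisym_wedge (R : comPzRingType) n (T : 'I_n -> 'I_n -> R) (x y : 'I_n -> R) :
  (forall i k, T i k = - T k i) ->
  \sum_(i < n) \sum_(k < n) T i k * (x i * y k - y i * x k) =
  2 * \sum_(i < n) \sum_(k < n) T i k * x i * y k.
Proof.
move=> Tanti.
have swap : \sum_(i < n) \sum_(k < n) T i k * (y i * x k) =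
            - \sum_(i < n) \sum_(k < n) T i k * x i * y k.
  rewrite exchange_big -sumrN; apply: eq_bigr => i _.
  by rewrite -sumrN; apply: eq_bigr => k _; rewrite Tanti; ring.
have -> : \sum_(i < n) \sum_(k < n) T i k * (x i * y k - y i * x k) =
  \sum_(i < n) \sum_(k < n) T i k * x i * y k - \sum_(i < n) \sum_(k < n) T i k * (y i * x k).
  rewrite -sumrB; apply: eq_bigr => i _.
  by rewrite -sumrB; apply: eq_bigr => k _; ring.
by rewrite swap; ring.
Qed.

Section Curvature.
Variables (R : realType) (n : nat) (Rm : tensor4 R n).
Hypothesis Rm_curv : is_curvature_tensor Rm.
Implicit Types (x y f : 'I_n -> R) (w : 'M[R]_n).

Definition wedge x y : 'M[R]_n := \matrix_(i, k) (x i * y k - y i * x k).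

Lemma two_form_wedge x y : two_form (wedge x y).
Proof. by apply/matrixP => i k; rewrite !mxE; ring. Qed.

Lemma curv_op_form_wedge x y :
  curv_op_form Rm (wedge x y) =
  4 * \sum_(i < n) \sum_(k < n) \sum_(j < n) \sum_(l < n)
        Rm i k j l * x i * y k * x j * y l.
Proof.
case: Rm_curv => R1 R2 _ _.
pose Q i k := \sum_(j < n) \sum_(l < n) Rm i k j l * x j * y l.
have inner i k : \sum_(j < n) \sum_(l < n) Rm i k j l * wedge x y i k * wedge x y j l =
                 2 * Q i k * (x i * y k - y i * x k).
  rewrite /Q -sum_antisym_wedge => [|j l]; last exact: R2.
  rewrite mulr_suml; apply: eq_bigr => j _; rewrite mulr_suml.
  by apply: eq_bigr => l _; rewrite !mxE; ring.
rewrite /curv_op_form.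
under eq_bigr => i _ do under eq_bigr => k _ do rewrite inner.
rewrite sum_antisym_wedge => [|i k]; last first.
  by rewrite /Q -mulrN -sumrN; congr (_ * _); apply: eq_bigr => j _;
     rewrite -sumrN; apply: eq_bigr => l _; rewrite R1; ring.
rewrite /Q !mulr_sumr; apply: eq_bigr => i _; rewrite !mulr_sumr.
apply: eq_bigr => k _; rewrite !(mulr_sumr, mulr_suml); apply: eq_bigr => j _.
by rewrite !(mulr_sumr, mulr_suml); apply: eq_bigr => l _; ring.
Qed.

Lemma pos_curv_op_ge0 w : pos_curv_op Rm -> two_form w -> 0 <= curv_op_form Rm w.
Proof.
move=> Rm_pos w_two; have [->|w_neq0] := eqVneq w 0; last exact/ltW/Rm_pos.
rewrite /curv_op_form big1 // => i _; rewrite big1 // => k _.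
by rewrite big1 // => j _; rewrite big1 // => l _; rewrite !mxE !mulr0.
Qed.

Definition jacobi f i k : R := \sum_(j < n) \sum_(l < n) Rm i j k l * f j * f l.

Lemma quad_form_jacobi f x :
  quad_form (jacobi f) x =
  \sum_(i < n) \sum_(k < n) \sum_(j < n) \sum_(l < n) Rm i k j l * x i * f k * x j * f l.
Proof.
rewrite /quad_form /matvec /jacobi; apply: eq_bigr => i _.
rewrite mulr_sumr [RHS]exchange_big; apply: eq_bigr => k _.
rewrite mulr_suml mulr_sumr; apply: eq_bigr => j _.
by rewrite mulr_suml mulr_sumr; apply: eq_bigr => l _; ring.
Qed.

Lemma jacobi_psd f : pos_curv_op Rm -> psd (jacobi f).
Proof.
move=> Rm_pos x; rewrite quad_form_jacobi.
have := pos_curv_op_ge0 Rm_pos (two_form_wedge x f).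
by rewrite curv_op_form_wedge pmulr_rge0.
Qed.

Lemma ricci_sum_jacobi i k : ricci Rm i k = \sum_(m < n) jacobi (basis m) i k.
Proof.
case: Rm_curv => R1 R2 _ _; apply: eq_bigr => m _; rewrite /jacobi.
under eq_bigr => j _ do rewrite sum_mul_basis.
by rewrite sum_mul_basis R1 R2 opprK.
Qed.

Lemma psd_ricci : pos_curv_op Rm -> psd (ricci Rm).
Proof.
move=> Rm_pos x.
have -> : quad_form (ricci Rm) x = quad_form (fun i k => \sum_m jacobi (basis m) i k) x.
  by apply: eq_bigr => i _; congr (_ * _); apply: eq_bigr => k _; rewrite ricci_sum_jacobi.
by apply: psd_sum => m; apply: jacobi_psd.
Qed.

Lemma sym_ricci : sym_form (ricci Rm).
Proof. by case: Rm_curv => _ _ R3 _ i k; apply: eq_bigr => m _; rewrite R3. Qed.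

End Curvature.

Theorem lemma5 (R : realType) (n : nat) (Rm : tensor4 R n) (df : 'I_n -> R) :
  is_curvature_tensor Rm -> pos_curv_op Rm ->
  0 <= \sum_(i < n) \sum_(j < n) \sum_(k < n) \sum_(l < n)
         Rm i j k l * ricci Rm i k * df j * df l.
Proof.
move=> Rm_curv Rm_pos.
have -> : \sum_(i < n) \sum_(j < n) \sum_(k < n) \sum_(l < n)
            Rm i j k l * ricci Rm i k * df j * df l =
          frobenius (jacobi Rm df) (ricci Rm).
  rewrite /frobenius /jacobi; apply: eq_bigr => i _; rewrite exchange_big.
  apply: eq_bigr => k _; rewrite mulr_suml; apply: eq_bigr => j _.
  by rewrite mulr_suml; apply: eq_bigr => l _; ring.
by apply: frobenius_psd_ge0; [exact: jacobi_psd | exact: sym_ricci | exact: psd_ricci].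
Qed.
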